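(* Let $h>0$ and $n\ge1$. For $(\theta_1,\dots,\theta_n)$ with $1>\theta_1>\theta_2>\cdots>\theta_n>0$ let $\Theta\in\mathbb{R}^{n\times n}$ be the matrix with entries $\Theta_{ii}=\frac{1}{4h}\cot(\pi\theta_i)$ and, for $i\neq j$, $\Theta_{ij}=\frac{1}{4h}\left(\cot\left(\pi\frac{\theta_i+\theta_j}{2}\right)-\cot\left(\pi\frac{\theta_i-\theta_j}{2}\right)\right)$. Then there exists $(\theta_1,\dots,\theta_n)\in(0,1)^n$ with $1>\theta_1>\theta_2>\cdots>\theta_n>0$ for which $\Theta$ is singular. *)

From HB Require Import structures.
From mathcomp Require Import all_boot all_order all_algebra.
From mathcomp Require Import Rstruct.
From Stdlib Require Import Reals.

Set Implicit Arguments.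
Unset Strict Implicit.
Unset Printing Implicit Defensive.

(* cot x = cos x / sin x (only evaluated where sin x <> 0 in the statement) *)
Definition cot (x : R) : R := Rdiv (cos x) (sin x).

Definition Theta (h : R) (n : nat) (theta : 'I_n -> R) : 'M[R]_n :=
  \matrix_(i < n, j < n)
    if i == j then Rdiv (cot (PI * theta i)) (4 * h)
    else Rdiv (cot (PI * ((theta i + theta j) / 2)) - cot (PI * ((theta i - theta j) / 2))) (4 * h).

(* Take theta_i = (2 p_i - 1) / (2n) with p_i = n - i in {1, ..., n}, and put
   beta = pi / (2n), c k = cot (k beta).  Then 4h Theta_ij = c (p_i + p_j - 1) - c (p_i - p_j),
   also on the diagonal since cot 0 = 0 (Rinv 0 = 0).  Against the sign vector v_i = (-1)^(p_i),
   a sign identity turns row j of Theta v into (-1)^(p_j - 1) / (4h) times the sum of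
   g k = (-1)^k c k over the 2n consecutive integers p_j - n, ..., p_j + n - 1.  As g is
   odd and 2n-periodic, any such sum equals g 0 - g n = 0, so Theta v = 0. *)

From mathcomp Require Import all_boot all_order all_algebra.
From mathcomp Require Import Rstruct zify.
From Stdlib Require Import Reals Lra Lia ZArith.

Import GRing.Theory.
Local Open Scope ring_scope.

Section WindowSum.
Context {V : zmodType} (f : Z -> V).

Definition window_sum (n : nat) (p : Z) : V :=
  \sum_(j < n) (f (p + Z.of_nat j)%Z + f (p - Z.of_nat j - 1)%Z).

Lemma sum_ord_shiftl (m : nat) (u : Z -> V) (p : Z) :
  \sum_(j < m.+1) u (p + Z.of_nat j)%Z = u p + \sum_(i < m) u (p + 1 + Z.of_nat i)%Z.
Proof.
rewrite big_ord_recl Z.add_0_r; congr (_ + _).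
by apply: eq_bigr => i _; congr u; rewrite /= /bump /=; lia.
Qed.

Lemma window_sumS (n : nat) (p : Z) :
  (forall k, f (k + 2 * Z.of_nat n)%Z = f k) -> window_sum n (p + 1)%Z = window_sum n p.
Proof.
case: n => [|m] f_per; first by rewrite /window_sum !big_ord0.
have last_up : \sum_(j < m.+1) f (p + 1 + Z.of_nat j)%Z =
               \sum_(i < m) f (p + 1 + Z.of_nat i)%Z + f (p - Z.of_nat m - 1)%Z.
  by rewrite big_ord_recr -(f_per (p - _ - 1)%Z); congr (_ + f _); rewrite /=; lia.
have last_down : \sum_(j < m.+1) f (p - Z.of_nat j - 1)%Z =
                 \sum_(i < m) f (p - Z.of_nat i - 1)%Z + f (p - Z.of_nat m - 1)%Z.
  by rewrite big_ord_recr.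
have first_down : \sum_(j < m.+1) f (p + 1 - Z.of_nat j - 1)%Z =
                  f p + \sum_(i < m) f (p - Z.of_nat i - 1)%Z.
  rewrite big_ord_recl; congr (f _ + _); first by rewrite /=; lia.
  by apply: eq_bigr => i _; congr f; rewrite /= /bump /=; lia.
rewrite /window_sum !big_split /= last_up last_down first_down sum_ord_shiftl.
by rewrite (AC (2*2) ((3*1)*(4*2))).
Qed.

Lemma window_sum0 (n : nat) :
  (forall k, f (- k)%Z = - f k) -> window_sum n 0 = f 0%Z - f (Z.of_nat n).
Proof.
move=> f_odd; case: n => [|m]; first by rewrite /window_sum big_ord0 subrr.
have -> : window_sum m.+1 0 = \sum_(j < m.+1) f (0 + Z.of_nat j)%Z -
                              \sum_(j < m.+1) f (0 + 1 + Z.of_nat j)%Z.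
  rewrite /window_sum big_split -sumrN; congr (_ + _).
  by apply: eq_bigr => j _; rewrite -f_odd; congr f; lia.
rewrite sum_ord_shiftl [X in _ - X]big_ord_recr opprD addrA addrK.
by congr (_ - f _); change (nat_of_ord (@ord_max m)) with m; lia.
Qed.

Lemma window_sum_nat (n k : nat) :
  (forall k, f (k + 2 * Z.of_nat n)%Z = f k) -> (forall k, f (- k)%Z = - f k) ->
  window_sum n (Z.of_nat k) = f 0%Z - f (Z.of_nat n).
Proof.
move=> f_per f_odd; elim: k => [|k IH]; first exact: window_sum0.
by rewrite Nat2Z.inj_succ -Z.add_1_r window_sumS.
Qed.

End WindowSum.

Section SignedCot.
Local Open Scope R_scope.

Definition neg1_pow (k : Z) : R := if Z.even k then 1 else -1.

Lemma neg1_powD a b : neg1_pow (a + b) = neg1_pow a * neg1_pow b.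
Proof. by rewrite /neg1_pow Z.even_add; case: (Z.even a); case: (Z.even b) => /=; ring. Qed.

Lemma neg1_powN a : neg1_pow (- a) = neg1_pow a.
Proof. by rewrite /neg1_pow Z.even_opp. Qed.

Lemma neg1_pow_double a : neg1_pow (2 * a) = 1.
Proof. by rewrite /neg1_pow Z.even_mul. Qed.

Lemma neg1_pow_neq0 a : neg1_pow a <> 0.
Proof. by rewrite /neg1_pow; case: (Z.even a); lra. Qed.

Lemma neg1_pow_mul_diff (c : Z -> R) (a b : Z) :
  neg1_pow b * (c (a + b - 1)%Z - c (a - b)%Z) =
  neg1_pow (a - 1) * (neg1_pow (a + b - 1) * c (a + b - 1)%Z + neg1_pow (a - b) * c (a - b)%Z).
Proof.
set s := neg1_pow (a - 1).
have sq : s * s = 1.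
  by rewrite -neg1_powD (_ : (a - 1 + (a - 1) = 2 * (a - 1))%Z) ?neg1_pow_double //; lia.
have e1 : neg1_pow (a + b - 1) = s * neg1_pow b.
  by rewrite -neg1_powD; congr neg1_pow; lia.
have e2 : neg1_pow (a - b) = - (s * neg1_pow b).
  rewrite (_ : (a - b = (a + b - 1) + (2 * - b + 1))%Z); last lia.
  by rewrite neg1_powD e1 neg1_powD neg1_pow_double (_ : neg1_pow 1 = -1) //; ring.
by rewrite e1 e2 -[LHS]Rmult_1_l -sq; ring.
Qed.

Lemma cotN x : cot (- x) = - cot x.
Proof. rewrite /cot /Rdiv cos_neg sin_neg Rinv_opp; ring. Qed.

Lemma cotDPI x : cot (x + PI) = cot x.
Proof. rewrite /cot /Rdiv neg_cos neg_sin Rinv_opp; ring. Qed.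

Lemma cot0 : cot 0 = 0.
Proof. by rewrite /cot /Rdiv sin_0 Rinv_0 Rmult_0_r. Qed.

Lemma cot_PI2 : cot (PI / 2) = 0.
Proof. by rewrite /cot cos_PI2 /Rdiv Rmult_0_l. Qed.

Definition cot_step (n : nat) (k : Z) : R := cot (IZR k * (PI / (2 * INR n))).

Definition signed_cot (n : nat) (k : Z) : R := neg1_pow k * cot_step n k.

Lemma signed_cot_periodic n k :
  (0 < n)%nat -> signed_cot n (k + 2 * Z.of_nat n) = signed_cot n k.
Proof.
move=> n_gt0; have nR : INR n <> 0 by apply: not_0_INR; lia.
rewrite /signed_cot /cot_step neg1_powD neg1_pow_double Rmult_1_r -[in RHS]cotDPI.
by congr (_ * cot _); rewrite plus_IZR mult_IZR -INR_IZR_INZ; field.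
Qed.

Lemma signed_cotN n k : signed_cot n (- k) = - signed_cot n k.
Proof.
rewrite /signed_cot /cot_step neg1_powN opp_IZR Ropp_mult_distr_l_reverse cotN; ring.
Qed.

Lemma signed_cot0 n : signed_cot n 0 = 0.
Proof. by rewrite /signed_cot /cot_step Rmult_0_l cot0 Rmult_0_r. Qed.

Lemma signed_cot_half n : (0 < n)%nat -> signed_cot n (Z.of_nat n) = 0.
Proof.
move=> n_gt0; have nR : INR n <> 0 by apply: not_0_INR; lia.
rewrite /signed_cot /cot_step -INR_IZR_INZ (_ : INR n * (PI / (2 * INR n)) = PI / 2).
  by rewrite cot_PI2 Rmult_0_r.
by field.
Qed.

Lemma window_sum_signed_cot (n k : nat) :
  (0 < n)%nat -> window_sum (signed_cot n) n (Z.of_nat k) = 0.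
Proof.
move=> n_gt0; rewrite window_sum_nat ?signed_cot0 ?signed_cot_half //.
- by rewrite subrr.
- by move=> j; apply: signed_cot_periodic.
- exact: signed_cotN.
Qed.

End SignedCot.

Lemma sum_ord_rev_index {V : zmodType} (n : nat) (u : Z -> V) :
  \sum_(i < n) u (Z.of_nat (n - i)) = \sum_(i < n) u (Z.of_nat i + 1)%Z.
Proof.
rewrite (reindex_inj rev_ord_inj); apply: eq_bigr => i _; congr u.
by have := ltn_ord i; rewrite /=; lia.
Qed.

Section GridTheta.
Local Open Scope R_scope.
Variable n : nat.

Lemma INR_gt0_ord (i : 'I_n) : 0 < INR n.
Proof. by apply: lt_0_INR; have := ltn_ord i; lia. Qed.

Definition grid_index (i : 'I_n) : Z := Z.of_nat (n - i).

Definition grid_theta (i : 'I_n) : R := (2 * IZR (grid_index i) - 1) / (2 * INR n).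

Lemma grid_index_bounds (i : 'I_n) : (1 <= grid_index i <= Z.of_nat n)%Z.
Proof. by have := ltn_ord i; rewrite /grid_index; lia. Qed.

Lemma grid_theta_bounds (i : 'I_n) : 0 < grid_theta i < 1.
Proof.
have n_pos := INR_gt0_ord i.
have [/IZR_le p_ge1 /IZR_le p_len] := grid_index_bounds i.
rewrite -INR_IZR_INZ in p_len; rewrite /grid_theta; split.
- apply: Rdiv_lt_0_compat; lra.
- apply: (Rmult_lt_reg_r (2 * INR n)); first lra.
  rewrite /Rdiv Rmult_assoc Rinv_l; lra.
Qed.

Lemma grid_theta_decreasing (i j : 'I_n) : (i < j)%nat -> grid_theta j < grid_theta i.
Proof.
move=> lt_ij; have n_pos := INR_gt0_ord i.
have /IZR_lt lt_p : (grid_index j < grid_index i)%Z.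
  by have := ltn_ord j; rewrite /grid_index; lia.
rewrite /grid_theta /Rdiv; apply: Rmult_lt_compat_r; last lra.
by apply: Rinv_0_lt_compat; lra.
Qed.

Lemma Theta_grid_theta (h : R) (i j : 'I_n) :
  Theta h grid_theta i j =
  (cot_step n (grid_index i + grid_index j - 1) - cot_step n (grid_index i - grid_index j)) / (4 * h).
Proof.
have n_pos := INR_gt0_ord i.
rewrite /Theta mxE /cot_step; case: eqP => [<-|_].
- rewrite Z.sub_diag Rmult_0_l cot0 Rminus_0_r.
  by congr (cot _ / _); rewrite /grid_theta minus_IZR plus_IZR; field; lra.
- by congr ((cot _ - cot _) / _); rewrite /grid_theta ?minus_IZR ?plus_IZR; field; lra.
Qed.

End GridTheta.

Arguments grid_index {n} i.

Lemma Theta_grid_theta_sign_kernel (h : R) (n : nat) (j : 'I_n) :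
  Rlt 0 h -> \sum_(i < n) neg1_pow (grid_index i) * Theta h (grid_theta n) j i = 0.
Proof.
move=> h_pos; set a := grid_index j.
have term i : neg1_pow (grid_index i) * Theta h (grid_theta n) j i =
    Rdiv (neg1_pow (a - 1)) (Rmult 4 h) *
    (signed_cot n (a + grid_index i - 1) + signed_cot n (a - grid_index i)) :> R.
  rewrite Theta_grid_theta -/a -!RmultE -RplusE.
  transitivity (Rdiv (neg1_pow (grid_index i) *
                       (cot_step n (a + grid_index i - 1) - cot_step n (a - grid_index i)))
                      (Rmult 4 h)).
    by field; lra.
  by rewrite neg1_pow_mul_diff /signed_cot; field; lra.
rewrite (eq_bigr _ (fun i _ => term i)) -mulr_sumr.
have -> : \sum_(i < n) (signed_cot n (a + grid_index i - 1) + signed_cot n (a - grid_index i)) =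
          window_sum (signed_cot n) n a.
  rewrite (sum_ord_rev_index n (fun b => signed_cot n (a + b - 1) + signed_cot n (a - b))).
  by apply: eq_bigr => i _; congr (signed_cot n _ + signed_cot n _); lia.
have n_gt0 : (0 < n)%nat by apply: leq_ltn_trans (ltn_ord j).
by rewrite /a /grid_index window_sum_signed_cot // mulr0.
Qed.

Theorem proposition5p4 (h : R) (n : nat) :
  Rlt 0 h -> leq 1 n ->
  exists theta : 'I_n -> R,
    (forall i : 'I_n, Rlt 0 (theta i) /\ Rlt (theta i) 1) /\
    (forall i j : 'I_n, ltn i j -> Rlt (theta j) (theta i)) /\
    \det (Theta h theta) = (0 : R).
Proof.
move=> h_pos; case: n => [//|m] _.
exists (grid_theta m.+1); split; [|split].
- exact: grid_theta_bounds.
- exact: grid_theta_decreasing.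
- apply/eqP; rewrite -det_tr; apply/det0P.
  exists (\row_i neg1_pow (grid_index i)).
  + by apply/eqP => /rowP /(_ ord0); rewrite !mxE; exact: neg1_pow_neq0.
  + apply/rowP => j; rewrite !mxE -[RHS](Theta_grid_theta_sign_kernel _ _ j h_pos).
    by apply: eq_bigr => i _; rewrite !mxE.
Qed.
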